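(* For every integer $R$ with $0\le R<\ell$ and every $y\in\{0,1\}^n$ with $y\ne0^n$, $$\Big\|\sum_{o\in[R]}\big(\mathrm{id}-\mathsf{QE}_{=o}\big)\cdot\tilde H_y\cdot\mathsf{QEC}_{(R,=o)}\Big\|_{\mathrm{op}}\le\frac{R^5}{\sqrt\ell}.$$
   Context: $[m]=\{0,1,\dots,m-1\}$. Bosonic setting with $2^n$ modes indexed by $\{0,1\}^n$: position operators $\hat a_x,\hat a_x^\dagger$ with standard bosonic commutation relations, vacuum $|\mathrm{vac}\rangle$, momentum operators $\tilde a_y=2^{-n/2}\sum_x(-1)^{x\cdot y}\hat a_x$ and $\tilde a_y^\dagger$ likewise, momentum Fock states $|u\rangle=\prod_y(\tilde a_y^\dagger)^{u_y}(u_y!)^{-1/2}|\mathrm{vac}\rangle$. Work in the $\ell$-boson subspace ($\sum_yu_y=\ell$). $\tilde H_y=\frac1\ell\sum_{x,x'}\tilde a^\dagger_{x\oplus y}\tilde a^\dagger_{x'\oplus y}\tilde a_x\tilde a_{x'}$. $\mathsf{Con}_R$ projects onto momentum Fock states with $u_{0^n}\ge\ell-R$; $\mathsf{QE}_{=o}$ projects onto those with exactly $o$ odd entries $u_y$ among $y\ne0^n$; $\mathsf{QEC}_{(R,=o)}=\mathsf{Con}_R\mathsf{QE}_{=o}$. *)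

(* Momentum-mode Fock space of 2^n bosonic modes, scalars in algC. *)
From mathcomp Require Import all_boot all_order all_algebra all_field.
Set Implicit Arguments. Unset Strict Implicit. Unset Printing Implicit Defensive.
Import Order.TTheory GRing.Theory Num.Theory.
Local Open Scope ring_scope.

Definition Mode (n : nat) := {ffun 'I_n -> bool}.
Definition mode0 (n : nat) : Mode n := [ffun => false].
Definition mxor (n : nat) (x y : Mode n) : Mode n := [ffun i => addb (x i) (y i)].

(* Occupation-number vectors u = (u_y)_y of momentum Fock states |u>. *)
Definition Occ (n : nat) := {ffun Mode n -> nat}.
(* Vectors in the Fock space: coefficient functions on momentum Fock states. *)
Definition State (n : nat) := Occ n -> algC.

Definition occ_inc n (x : Mode n) (u : Occ n) : Occ n := [ffun m => (u m + (m == x))%N].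
Definition occ_dec n (x : Mode n) (u : Occ n) : Occ n := [ffun m => (u m - (m == x))%N].

(* Momentum annihilation  a~_x |v> = sqrt(v_x) |v - e_x>  written on coefficients. *)
Definition ann n (x : Mode n) (f : State n) : State n :=
  fun u => sqrtC ((u x).+1)%:R * f (occ_inc x u).
(* Momentum creation  a~_x^dag |v> = sqrt(v_x + 1) |v + e_x>  written on coefficients. *)
Definition cre n (x : Mode n) (f : State n) : State n :=
  fun u => sqrtC (u x)%:R * f (occ_dec x u).

Definition Htil n (l : nat) (y : Mode n) (f : State n) : State n :=
  fun u => (l%:R)^-1 * \sum_(x : Mode n) \sum_(x' : Mode n)
     cre (mxor x y) (cre (mxor x' y) (ann x (ann x' f))) u.

Definition Con n (l R : nat) (f : State n) : State n :=
  fun u => if (l - R <= u (mode0 n))%N then f u else 0.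

Definition nodd n (u : Occ n) : nat := #|[set y : Mode n | (y != mode0 n) && odd (u y)]|.

Definition QE n (o : nat) (f : State n) : State n :=
  fun u => if nodd u == o then f u else 0.

Definition QEC n (l R o : nat) (f : State n) : State n := Con l R (QE o f).

Definition Top n (l R : nat) (y : Mode n) (f : State n) : State n :=
  fun u => \sum_(o < R) (Htil l y (QEC l R o f) u - QE o (Htil l y (QEC l R o f)) u).

Definition inSector n (l : nat) (u : Occ n) : bool := (\sum_(m : Mode n) u m == l)%N.
Definition inBosonSpace n (l : nat) (f : State n) : Prop :=
  forall u, ~~ inSector l u -> f u = 0.
Definition toOcc n l (g : {ffun Mode n -> 'I_l.+1}) : Occ n := [ffun m => nat_of_ord (g m)].

(* Euclidean norm on the l-boson subspace (its Fock states all have u_y <= l). *)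
Definition bnorm n (l : nat) (f : State n) : algC :=
  sqrtC (\sum_(g : {ffun Mode n -> 'I_l.+1} | inSector l (toOcc g)) `|f (toOcc g)| ^+ 2).

From mathcomp Require Import all_boot all_order all_algebra all_field.
From mathcomp Require Import zify ring.
Import Order.TTheory GRing.Theory Num.Theory.
Set Implicit Arguments. Unset Strict Implicit. Unset Printing Implicit Defensive.

(* Write (T psi)(v) as a sum over pairs (x, x') of Top_coef v x x' * psi w, where w is
   the Fock state that H~_y maps to v by moving two bosons from x, x' to x + y, x' + y.
   A coefficient survives only if the hop changes the set of odd modes (x <> x' and
   x' <> x + y) and w lies in the range of some QEC_(R,=o); then v has at most R + 2
   occupied modes, at most (R + 2)(R + 1) pairs contribute, and Cauchy-Schwarz bounds
   |(T psi)(v)|^2 by (R + 2)(R + 1) times the sum of the squared terms.  For fixed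
   (x, x') the map v |-> w is injective, so summing over v is summing over w with weight
   l^-2 (w_(x+y) + 1)(w_(x'+y) + 1) w_x w_x'.  As w has at most R bosons outside the
   zero mode, these weights add up to at most l R (R + 1)(5 R + 2) over all pairs, and
   to 0 when R < 2.  Hence ||T psi||^2 <= R^10 / l * ||psi||^2. *)

Lemma card_distinct_pairs (I : finType) (S : {pred I}) :
  #|[pred q : I * I | [&& q.1 \in S, q.2 \in S & q.1 != q.2]]| = #|S| * #|S|.-1.
Proof.
pose F p p' := [&& p \in S, p' \in S & p != p'] : nat.
rewrite -[LHS]sum1_card [LHS]big_mkcond /= (eq_bigr (fun q => F q.1 q.2)) // -(pair_bigA _ F) /=.
rewrite (bigID (mem S)) /= [X in _ + X]big1 ?addn0 => [|p /negbTE Sp]; last first.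
  by rewrite big1 // /F Sp.
rewrite -sum_nat_const; apply: eq_bigr => p Sp.
rewrite (cardD1 p) Sp add1n /= -sum1_card [RHS]big_mkcond /=; apply: eq_bigr => p' _.
by rewrite /F Sp !inE eq_sym; case: (p' \in S); case: (p' != p).
Qed.

Lemma card_support_le (I : finType) (i0 : I) (u : I -> nat) :
  #|[pred i | 0 < u i]| <= 1 + \sum_(i | i != i0) u i.
Proof.
rewrite -sum1_card big_mkcond (bigD1 i0) //=; apply: leq_add; first by case: ifP.
by apply: leq_sum => i _; rewrite inE; case: (u i).
Qed.

Lemma sum_pairs_not_both (I : finType) (Z : pred I) (a : I -> nat) :
  \sum_x \sum_x' (~~ (Z x && Z x')) * (a x * a x') =
  (\sum_(x | ~~ Z x) a x) * (2 * \sum_(x | Z x) a x + \sum_(x | ~~ Z x) a x).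
Proof.
set b := \sum_(x | Z x) a x; set c := \sum_(x | ~~ Z x) a x.
have sumZZ : \sum_x \sum_x' (Z x && Z x') * (a x * a x') = b * b.
  rewrite big_distrl (bigID Z) /= [X in _ + X]big1 ?addn0 => [|x /negbTE Zx]; last first.
    by rewrite big1 // => x' _; rewrite Zx.
  apply: eq_bigr => x Zx; rewrite big_distrr (bigID Z) /= [X in _ + X]big1 ?addn0.
    by apply: eq_bigr => x' Zx'; rewrite Zx Zx' mul1n.
  by move=> x' /negbTE Zx'; rewrite Zx Zx'.
have sumAA : \sum_x \sum_x' a x * a x' = (b + c) * (b + c).
  have sumA : \sum_x a x = b + c by rewrite (bigID Z).
  by rewrite -sumA big_distrl; apply: eq_bigr => x _; rewrite big_distrr.
apply: (@addnI (b * b)); rewrite -{1}sumZZ -big_split /=.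
rewrite (eq_bigr (fun x => \sum_x' a x * a x')) ?sumAA => [|x _]; first by ring.
by rewrite -big_split; apply: eq_bigr => x' _ /=; rewrite -mulnDl; case: (_ && _); rewrite mul1n.
Qed.

Lemma deg10_bound (R : nat) : 2 <= R -> R.+2 * R.+1 * (R * R.+1 * (5 * R + 2)) <= R ^ 10.
Proof.
move=> R2; have R5 : 32 <= R ^ 5 by rewrite -[32]/(2 ^ 5) leq_exp2r.
rewrite -[10]/(5 + 5) expnD; move: R5; rewrite !expnS expn0 muln1 => R5.
nia.
Qed.

Local Open Scope ring_scope.

Section CauchySchwarz.
Variables (R : numDomainType) (I : finType) (A : {pred I}).

Lemma cauchy_schwarz_card (a : I -> R) : {in A, forall i, a i \is Num.real} ->
  (\sum_(i in A) a i) ^+ 2 <= #|A|%:R * \sum_(i in A) a i ^+ 2.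
Proof.
move=> Ra; rewrite -(ler_pMn2r (ltn0Sn 1)).
have -> : (\sum_(i in A) a i) ^+ 2 *+ 2 = \sum_(i in A) \sum_(j in A) a i * a j *+ 2.
  rewrite expr2 mulr_suml -sumrMnl; apply: eq_bigr => i _.
  by rewrite mulr_sumr -sumrMnl.
apply: le_trans (_ : \sum_(i in A) \sum_(j in A) (a i ^+ 2 + a j ^+ 2) <= _).
  apply: ler_sum => i Ai; apply: ler_sum => j Aj.
  exact: (real_leif_mean_square_scaled (Ra i Ai) (Ra j Aj)).1.
rewrite (eq_bigr (fun i => a i ^+ 2 *+ #|A| + \sum_(j in A) a j ^+ 2)) => [|i _]; last first.
  by rewrite big_split sumr_const.
by rewrite big_split /= sumr_const sumrMnl mulr_natl mulr2n.
Qed.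

Lemma cauchy_schwarz_card_norm (z : I -> R) : (forall i, i \notin A -> z i = 0) ->
  `|\sum_i z i| ^+ 2 <= #|A|%:R * \sum_i `|z i| ^+ 2.
Proof.
move=> zA.
have sumA (F : I -> R) : (forall i, i \notin A -> F i = 0) -> \sum_i F i = \sum_(i in A) F i.
  by move=> FA; rewrite (bigID (mem A)) /= [X in _ + X]big1 ?addr0.
rewrite sumA // [X in _ * X]sumA => [|i /zA ->]; last by rewrite normr0 expr0n.
apply: le_trans (cauchy_schwarz_card (fun i _ => normr_real (z i))).
by rewrite lerXn2r ?nnegrE ?sumr_ge0 // ler_norm_sum.
Qed.

End CauchySchwarz.

Lemma ler_sum_inj (R : numDomainType) (I J : finType) (P : pred I) (Q : pred J)
    (h : I -> J) (F : I -> R) (G : J -> R) :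
    (forall j, Q j -> 0 <= G j) ->
    {in [pred i | P i && (F i != 0)] &, injective h} ->
    (forall i, P i -> F i != 0 -> Q (h i) /\ F i <= G (h i)) ->
  \sum_(i | P i) F i <= \sum_(j | Q j) G j.
Proof.
move=> G0 hinj hFG; set S := [pred i | P i && (F i != 0)].
have -> : \sum_(i | P i) F i = \sum_(i in S) F i.
  by rewrite (bigID (fun i => F i != 0)) /= [X in _ + X]big1 ?addr0 // => i /andP[_ /negPn/eqP].
apply: le_trans (_ : \sum_(i in S) G (h i) <= _).
  by apply: ler_sum => i /andP[Pi Fi]; case: (hFG i Pi Fi).
rewrite -big_imset // [X in _ <= X](bigID (mem (h @: S))) /=.
rewrite (eq_bigl (fun j => Q j && (j \in h @: S))) ?lerDl ?sumr_ge0 // => [j /andP[/G0]//|j].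
apply/idP/andP => [jS|[]//]; split=> //.
by case/imsetP: jS => i /andP[Pi Fi] ->; case: (hFG i Pi Fi).
Qed.


Lemma mxorxx n (x : Mode n) : mxor x x = mode0 n.
Proof. by apply/ffunP => i; rewrite !ffunE addbb. Qed.

Section Hopping.
Variables (n : nat) (y : Mode n).
Implicit Types (v w : Occ n) (x : Mode n).

Lemma mxorK x : mxor (mxor x y) y = x.
Proof. by apply/ffunP => i; rewrite !ffunE addbK. Qed.

Lemma mxor_inj : injective (fun x => mxor x y).
Proof. exact: (can_inj (g := fun x => mxor x y) mxorK). Qed.

Lemma mxor0 : mxor (mode0 n) y = y.
Proof. by apply/ffunP => i; rewrite !ffunE. Qed.

Lemma mxor_eq0 x : (mxor x y == mode0 n) = (x == y).
Proof.
by apply/eqP/eqP => [e|->]; [rewrite -(mxorK x) e mxor0 | apply: mxorxx].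
Qed.

Definition hop_src v x x' : Occ n :=
  occ_inc x' (occ_inc x (occ_dec (mxor x' y) (occ_dec (mxor x y) v))).

Definition hop_amp v x x' : algC :=
  let v1 := occ_dec (mxor x y) v in
  let v2 := occ_dec (mxor x' y) v1 in
  sqrtC (v (mxor x y))%:R * (sqrtC (v1 (mxor x' y))%:R *
    (sqrtC (v2 x).+1%:R * sqrtC (occ_inc x v2 x').+1%:R)).

Lemma Htil_expand l (f : State n) v :
  Htil l y f v = l%:R^-1 * \sum_x \sum_x' hop_amp v x x' * f (hop_src v x x').
Proof.
congr (_ * _); apply: eq_bigr => x _; apply: eq_bigr => x' _.
by rewrite /cre /ann /hop_amp /hop_src !mulrA.
Qed.

Lemma hop_amp_neq0 v x x' : hop_amp v x x' != 0 ->
  (0 < v (mxor x y))%N && (0 < occ_dec (mxor x y) v (mxor x' y))%N.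
Proof.
rewrite /hop_amp; case: (v _) => [|a]; first by rewrite sqrtC0 mul0r eqxx.
by case: (occ_dec _ _ _) => [|b] //; rewrite sqrtC0 mul0r mulr0 eqxx.
Qed.

Lemma hop_src_balance v x x' : hop_amp v x x' != 0 -> forall m,
  (hop_src v x x' m + (m == mxor x y) + (m == mxor x' y) = v m + (m == x) + (m == x'))%N.
Proof.
move=> /hop_amp_neq0 /andP[v1 v2] m; rewrite /hop_src /occ_inc /occ_dec !ffunE.
have {v1}v1 : m == mxor x y -> (0 < v m)%N by move/eqP->.
have {v2}v2 : m == mxor x' y -> (0 < v m - (m == mxor x y))%N.
  by move/eqP=> ->; move: v2; rewrite /occ_dec ffunE.
move: v1 v2; case: (m == mxor x y); case: (m == mxor x' y) => /=; lia.
Qed.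

Lemma hop_src_inj v1 v2 x x' : hop_amp v1 x x' != 0 -> hop_amp v2 x x' != 0 ->
  hop_src v1 x x' = hop_src v2 x x' -> v1 = v2.
Proof.
move=> /hop_src_balance b1 /hop_src_balance b2 e; apply/ffunP => m.
by apply/eqP; rewrite -(eqn_add2r (m == x)) -(eqn_add2r (m == x')) -b1 -b2 e.
Qed.

Lemma nodd_eq v w : (forall m, odd (v m) = odd (w m)) -> nodd v = nodd w.
Proof. by move=> vw; apply: eq_card => m; rewrite !inE vw. Qed.

Lemma nodd_hop_src v x x' : hop_amp v x x' != 0 ->
  (x == x') || (x' == mxor x y) -> nodd (hop_src v x x') = nodd v.
Proof.
move=> /hop_src_balance b /orP[/eqP e | /eqP e]; subst x'; apply: nodd_eq => m; move: (b m).
  by move/(congr1 odd); rewrite -!addnA !addnn !oddD !odd_double !addbF.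
by rewrite mxorK addnAC => /addIn/addIn->.
Qed.

Hypothesis y0 : y != mode0 n.

Lemma mxor_neq x : mxor x y != x.
Proof.
apply: contra y0 => /eqP/ffunP xy; apply/eqP/ffunP => i.
by move: (xy i); rewrite !ffunE; case: (x i); case: (y i).
Qed.

Lemma normr_hop_amp v x x' (w := hop_src v x x') :
    x != x' -> x' != mxor x y -> hop_amp v x x' != 0 ->
  `|hop_amp v x x'| ^+ 2 = ((w (mxor x y)).+1 * (w (mxor x' y)).+1 * w x * w x')%:R.
Proof.
move=> xx' x'x /[dup] /hop_amp_neq0 /andP[v1 v2] _.
have neq (a b : Mode n) : a != b -> ((a == b) = false) * ((b == a) = false).
  by move=> /negbTE ab; rewrite ab eq_sym ab.
have yxx' : mxor x y != mxor x' y by rewrite (inj_eq mxor_inj).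
have x'yx : mxor x' y != x by apply: contra x'x => /eqP<-; rewrite mxorK.
have sep := (neq _ _ xx', neq _ _ x'x, neq _ _ yxx', neq _ _ x'yx,
             neq _ _ (mxor_neq x), neq _ _ (mxor_neq x')).
move: v2; rewrite /w /hop_src /hop_amp /occ_inc /occ_dec !ffunE !sep subn0 => v2.
rewrite !normrM !exprMn !ger0_norm ?sqrtC_ge0 ?ler0n // !sqrtCK -!natrM.
by rewrite !eqxx !subn0 !addn0 !subn1 !addn1 !prednK // !mulnA.
Qed.

End Hopping.

Section Sector.
Variables (n l : nat).
Implicit Types (u : Occ n) (m : Mode n).

Lemma sector_split u : inSector l u -> (u (mode0 n) + \sum_(m | m != mode0 n) u m)%N = l.
Proof. by rewrite /inSector (bigD1 (mode0 n)) //= => /eqP. Qed.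

Lemma le_sector u m : inSector l u -> (u m <= l)%N.
Proof. by rewrite /inSector (bigD1 m) //= => /eqP <-; apply: leq_addr. Qed.

Lemma le_sum_excited u m : m != mode0 n -> (u m <= \sum_(m' | m' != mode0 n) u m')%N.
Proof. by move=> m0; rewrite (bigD1 m) //= leq_addr. Qed.

Definition ofOcc u : {ffun Mode n -> 'I_l.+1} := [ffun m => inord (u m)].

Lemma ofOccK u : inSector l u -> toOcc (ofOcc u) = u.
Proof. by move=> lu; apply/ffunP => m; rewrite !ffunE inordK // ltnS le_sector. Qed.

Lemma toOcc_inj : injective (@toOcc n l).
Proof. by move=> g1 g2 /ffunP e; apply/ffunP => m; apply: val_inj; move: (e m); rewrite !ffunE. Qed.

End Sector.

Section Top.
Variables (n l R : nat) (y : Mode n).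
Hypotheses (RL : (R < l)%N) (y0 : y != mode0 n).
Implicit Types (v w : Occ n) (x : Mode n) (psi : State n).

Local Notation src := (hop_src y).
Local Notation amp := (hop_amp y).

Definition in_QEC w := (l - R <= w (mode0 n))%N && (nodd w < R)%N.

Definition flips v w := in_QEC w && (nodd w != nodd v).

Definition Top_coef v x x' : algC := l%:R^-1 * amp v x x' * (flips v (src v x x'))%:R.

Lemma sum_QEC_flips psi v w :
  \sum_(o < R) (if nodd v == o then 0 else QEC l R o psi w) = (flips v w)%:R * psi w.
Proof.
rewrite /QEC /Con /QE /flips /in_QEC.
case: (l - R <= w (mode0 n))%N; last by rewrite big1 ?mul0r // => o _; case: ifP.
case: (ltnP (nodd w) R) => [wR | Rw] /=; last first.
  rewrite big1 ?mul0r // => o _; case: ifP => // _; case: eqP => // wo.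
  by move: (ltn_ord o); rewrite -wo ltnNge Rw.
rewrite (bigD1 (Ordinal wR)) //= eqxx big1 ?addr0 => [|o /eqP oR]; last first.
  by case: ifP => // _; case: eqP => // wo; case: oR; apply: val_inj.
by rewrite eq_sym; case: eqP => _; rewrite ?mul0r ?mul1r.
Qed.

Lemma Top_expand psi v :
  Top l R y psi v = \sum_(k : Mode n * Mode n) Top_coef v k.1 k.2 * psi (src v k.1 k.2).
Proof.
rewrite -(pair_bigA _ (fun x x' => Top_coef v x x' * psi (src v x x'))) /Top.
have -> : \sum_(o < R) (Htil l y (QEC l R o psi) v - QE o (Htil l y (QEC l R o psi)) v) =
    \sum_(o < R) l%:R^-1 * \sum_x \sum_x' amp v x x' *
      (if nodd v == o then 0 else QEC l R o psi (src v x x')).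
  apply: eq_bigr => o _; rewrite /QE Htil_expand; case: ifP => _; last by rewrite subr0.
  by rewrite subrr big1 ?mulr0 // => x _; rewrite big1 // => x' _; rewrite mulr0.
rewrite -mulr_sumr [X in _ * X = _]exchange_big /= mulr_sumr; apply: eq_bigr => x _.
rewrite [X in _ * X = _]exchange_big /= mulr_sumr; apply: eq_bigr => x' _.
by rewrite -mulr_sumr sum_QEC_flips /Top_coef !mulrA.
Qed.

Lemma Top_coef_neq0 v x x' : Top_coef v x x' != 0 ->
  [/\ amp v x x' != 0, x != x', x' != mxor x y & flips v (src v x x')].
Proof.
rewrite /Top_coef; have [->|a0] := eqVneq (amp v x x') 0; first by rewrite mulr0 mul0r eqxx.
case fl: (flips v _); last by rewrite mulr0 eqxx.
move: fl; rewrite /flips => /andP[_ fl] _; split=> //; apply: contra fl => e.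
  by rewrite nodd_hop_src ?e.
by rewrite nodd_hop_src ?e ?orbT.
Qed.

Definition collision_weight w x x' : nat :=
  if [&& in_QEC w, x != x' & x' != mxor x y]
  then ((w (mxor x y)).+1 * (w (mxor x' y)).+1 * w x * w x')%N else 0%N.

Lemma normr_Top_coef v x x' :
  `|Top_coef v x x'| ^+ 2 <= l%:R ^- 2 * (collision_weight (src v x x') x x')%:R.
Proof.
have [->|c0] := eqVneq (Top_coef v x x') 0.
  by rewrite normr0 expr0n mulr_ge0 ?invr_ge0 ?exprn_ge0 ?ler0n.
have [a0 xx' x'x fl] := Top_coef_neq0 c0; move: (fl) => /andP[inQ _].
rewrite /collision_weight inQ xx' x'x /Top_coef fl mulr1 normrM exprMn normr_hop_amp //.
by rewrite normfV ger0_norm ?ler0n // exprVn.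
Qed.

Lemma Top_coef_vacuum v x x' : Top_coef v x x' != 0 -> (l - R <= (v (mode0 n)).+1)%N.
Proof.
case/Top_coef_neq0 => a0 xx' _ /andP[/andP[inQ _] _].
have le1 : ((mode0 n == x) + (mode0 n == x') <= 1)%N.
  case: (mode0 n =P x) => [e|_]; case: (mode0 n =P x') => [e'|_] //.
  by rewrite -e -e' eqxx in xx'.
apply: (leq_trans inQ); rewrite -addn1.
apply: leq_trans (_ : src v x x' (mode0 n) + (mode0 n == mxor x y) + (mode0 n == mxor x' y) <= _)%N.
  by rewrite -addnA leq_addr.
by rewrite hop_src_balance // -addnA leq_add2l.
Qed.

Lemma card_Top_coef_support v : inSector l v ->
  (#|[pred k : Mode n * Mode n | Top_coef v k.1 k.2 != 0%R]| <= R.+2 * R.+1)%N.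
Proof.
move=> lv; set A := [pred k | _].
have [[x0 x0'] c0|A0] := pickP A; last by rewrite eq_card0.
have vac := Top_coef_vacuum c0.
set S := [pred m | 0 < v m]%N.
have cardS : (#|S| <= R.+2)%N.
  by apply: leq_trans (card_support_le (mode0 n) v) _; have := sector_split lv; lia.
pose f (k : Mode n * Mode n) := (mxor k.1 y, mxor k.2 y).
have f_inj : injective f by apply: (can_inj (g := f)) => -[x x']; rewrite /f !mxorK.
rewrite -(card_imset _ f_inj); apply: leq_trans (_ : #|[pred q : Mode n * Mode n |
    [&& q.1 \in S, q.2 \in S & q.1 != q.2]]| <= _)%N.
  apply: subset_leq_card; apply/subsetP => _ /imsetP[[x x'] /= /Top_coef_neq0[a0 xx' _ _] ->].
  have /andP[ax ax'] := hop_amp_neq0 a0.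
  rewrite !inE /= ax (inj_eq (@mxor_inj _ y)) xx' andbT.
  by apply: leq_trans ax' _; rewrite ffunE leq_subr.
by rewrite card_distinct_pairs leq_mul //; case: #|S| cardS.
Qed.

Local Notation paired x := ((x == mode0 n) || (x == y)).

Definition pair_occ w x := (w x * (w (mxor x y)).+1)%N.

Lemma collision_weight_le w x x' : in_QEC w ->
  (collision_weight w x x' <= ~~ (paired x && paired x') * (pair_occ w x * pair_occ w x'))%N.
Proof.
rewrite /collision_weight => -> /=; case: ifP => // /andP[xx' x'x].
have -> : ~~ (paired x && paired x').
  apply: contra xx' => /andP[Zx Zx']; move: x'x.
  by case/orP: Zx => /eqP->; case/orP: Zx' => /eqP->; rewrite ?mxor0 ?mxorxx eqxx.
by rewrite mul1n; apply: eq_leq; rewrite /pair_occ; ring.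
Qed.

Lemma collision_weight_small w x x' : inSector l w -> (R < 2)%N ->
  collision_weight w x x' = 0%N.
Proof.
move=> lw R2; rewrite /collision_weight; case: ifP => // /and3P[/andP[vac wR] xx' _].
have [->|wx] := posnP (w x); first by rewrite muln0 mul0n.
have [->|wx'] := posnP (w x'); first by rewrite muln0.
have [m [m0 wm]] : exists m, m != mode0 n /\ (0 < w m)%N.
  by case: (eqVneq x (mode0 n)) => [e|]; [exists x'; rewrite -e eq_sym | exists x].
have wm1 : w m = 1%N by have := le_sum_excited w m0; have := sector_split lw; lia.
have : (0 < nodd w)%N by rewrite card_gt0; apply/set0Pn; exists m; rewrite inE m0 wm1.
lia.
Qed.

Lemma pair_occ_paired w : in_QEC w -> inSector l w ->
  (\sum_(x | paired x) pair_occ w x <= l * (2 * R + 1))%N.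
Proof.
move=> /andP[vac _] lw; rewrite (bigD1 (mode0 n)) ?eqxx //= (bigD1 y) ?eqxx ?orbT ?y0 //=.
rewrite big1 ?addn0 => [|x /andP[/andP[Zx x0] xy]]; last by case/orP: Zx => Zx; rewrite Zx in x0 xy.
rewrite /pair_occ mxor0 mxorxx.
have := le_sum_excited w y0; have := sector_split lw.
have : (w (mode0 n) <= l)%N := le_sector (mode0 n) lw.
nia.
Qed.

Lemma pair_occ_unpaired w : in_QEC w -> inSector l w ->
  (\sum_(x | ~~ paired x) pair_occ w x <= R * R.+1)%N.
Proof.
move=> /andP[vac _] lw; have wl := sector_split lw.
have sumR : (\sum_(m | m != mode0 n) w m <= R)%N by lia.
have excR m : m != mode0 n -> (w m <= R)%N by move/(le_sum_excited w)/leq_trans; apply.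
apply: (@leq_trans (\sum_(x | x != mode0 n) w x * R.+1)); first last.
  by rewrite -big_distrl leq_mul.
rewrite [X in (_ <= X)%N]big_mkcond [X in (X <= _)%N]big_mkcond; apply: leq_sum => x _.
rewrite negb_or; case: (x =P mode0 n) => //= _; case: (boolP (x == y)) => //= xy.
by rewrite /pair_occ leq_mul2l ltnS excR ?orbT // mxor_eq0.
Qed.

Lemma sum_collision_weight_le w : inSector l w ->
  (\sum_(k : Mode n * Mode n) collision_weight w k.1 k.2 <= l * (R * R.+1 * (5 * R + 2)))%N.
Proof.
move=> lw; have [inQ|notQ] := boolP (in_QEC w); last first.
  by rewrite big1 // => k _; rewrite /collision_weight (negbTE notQ).
rewrite -(pair_bigA _ (collision_weight w)).
apply: leq_trans (_ : \sum_x \sum_x' ~~ (paired x && paired x') *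
    (pair_occ w x * pair_occ w x') <= _)%N.
  by apply: leq_sum => x _; apply: leq_sum => x' _; apply: collision_weight_le.
rewrite sum_pairs_not_both.
have hb := pair_occ_paired inQ lw; have hc := pair_occ_unpaired inQ lw.
apply: leq_trans (leq_mul hc (leq_add (leq_mul (leqnn 2) hb) hc)) _.
rewrite [X in (_ <= X)%N]mulnCA leq_mul2l; apply/orP; right.
have : (R * R.+1 <= l * R)%N by rewrite mulnC leq_mul.
lia.
Qed.

Lemma sum_collision_weight_pow10 w : inSector l w ->
  (R.+2 * R.+1 * \sum_(k : Mode n * Mode n) collision_weight w k.1 k.2 <= R ^ 10 * l)%N.
Proof.
move=> lw; have [R2|R1] := ltnP R 2.
  by rewrite big1 ?muln0 // => k _; apply: collision_weight_small.
apply: leq_trans (leq_mul (leqnn _) (sum_collision_weight_le lw)) _.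
by rewrite mulnCA [X in (_ <= X)%N]mulnC leq_mul2l deg10_bound ?orbT.
Qed.

Local Notation sector_sum F :=
  (\sum_(g : {ffun Mode n -> 'I_l.+1} | inSector l (toOcc g)) F (toOcc g)).

Lemma sector_sum_Top_coef_le psi x x' : inBosonSpace l psi ->
  sector_sum (fun v => `|Top_coef v x x'| ^+ 2 * `|psi (src v x x')| ^+ 2) <=
  sector_sum (fun w => l%:R ^- 2 * (collision_weight w x x')%:R * `|psi w| ^+ 2).
Proof.
move=> psiB.
have supp v : `|Top_coef v x x'| ^+ 2 * `|psi (src v x x')| ^+ 2 != 0 ->
    Top_coef v x x' != 0 /\ inSector l (src v x x').
  rewrite mulf_eq0 negb_or !expf_eq0 /= !normr_eq0 => /andP[c0 p0]; split=> //.
  by apply/negPn/negP => /psiB e; rewrite e eqxx in p0.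
apply: (ler_sum_inj (h := fun g => ofOcc l (src (toOcc g) x x'))).
- by move=> g _; rewrite !mulr_ge0 ?invr_ge0 ?exprn_ge0 ?ler0n.
- move=> g1 g2 /andP[_ /supp[/Top_coef_neq0[a1 _ _ _] l1]].
  move=> /andP[_ /supp[/Top_coef_neq0[a2 _ _ _] l2]] e.
  by apply/toOcc_inj/(hop_src_inj a1 a2); rewrite -(ofOccK l1) -(ofOccK l2) e.
move=> g _ /supp[_ lsrc]; rewrite ofOccK //; split=> //.
by rewrite ler_wpM2r ?exprn_ge0 ?normr_Top_coef.
Qed.

Lemma sqr_norm_Top_le psi v : inSector l v ->
  `|Top l R y psi v| ^+ 2 <= (R.+2 * R.+1)%:R *
    \sum_(k : Mode n * Mode n) `|Top_coef v k.1 k.2| ^+ 2 * `|psi (src v k.1 k.2)| ^+ 2.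
Proof.
move=> lv; rewrite Top_expand.
apply: le_trans (cauchy_schwarz_card_norm (A := [pred k | Top_coef v k.1 k.2 != 0]) _) _.
  by move=> k; rewrite inE negbK => /eqP->; rewrite mul0r.
rewrite (eq_bigr (fun k => `|Top_coef v k.1 k.2| ^+ 2 * `|psi (src v k.1 k.2)| ^+ 2)) => [|k _].
  rewrite ler_wpM2r ?ler_nat ?card_Top_coef_support //.
  by apply: sumr_ge0 => k _; rewrite mulr_ge0 ?exprn_ge0.
by rewrite normrM exprMn.
Qed.

Lemma sector_sum_Top_le psi : inBosonSpace l psi ->
  sector_sum (fun v => `|Top l R y psi v| ^+ 2) <=
  (R ^ 10)%:R / l%:R * sector_sum (fun v => `|psi v| ^+ 2).
Proof.
move=> psiB; set C : algC := (R.+2 * R.+1)%:R.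
have l0 : l%:R != 0 :> algC by rewrite pnatr_eq0 -lt0n (leq_ltn_trans _ RL).
apply: le_trans (_ : sector_sum (fun v => C * \sum_(k : Mode n * Mode n)
    `|Top_coef v k.1 k.2| ^+ 2 * `|psi (src v k.1 k.2)| ^+ 2) <= _).
  by apply: ler_sum => g; apply: sqr_norm_Top_le.
rewrite -mulr_sumr exchange_big /=.
apply: le_trans (_ : C * \sum_(k : Mode n * Mode n) sector_sum (fun w =>
    l%:R ^- 2 * (collision_weight w k.1 k.2)%:R * `|psi w| ^+ 2) <= _).
  by rewrite ler_wpM2l ?ler0n //; apply: ler_sum => k _; apply: sector_sum_Top_coef_le.
rewrite exchange_big mulr_sumr mulr_sumr; apply: ler_sum => g lg.
rewrite -big_distrl -big_distrr /= -natr_sum mulrA ler_wpM2r ?exprn_ge0 // mulrCA -natrM.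
have -> : (R ^ 10)%:R / l%:R = l%:R ^- 2 * (R ^ 10 * l)%N%:R :> algC by rewrite natrM; field.
by rewrite ler_wpM2l ?invr_ge0 ?exprn_ge0 ?ler0n // ler_nat sum_collision_weight_pow10.
Qed.

End Top.


Theorem mainTheorem16 (n l R : nat) (y : Mode n) :
  (R < l)%N -> y != mode0 n ->
  forall psi : State n, inBosonSpace l psi ->
    bnorm l (Top l R y psi) <= (R%:R) ^+ 5 / sqrtC (l%:R) * bnorm l psi.
Proof.
move=> RL y0 psi psiB; rewrite /bnorm; set S1 := \sum_(g | _) _; set S2 := \sum_(g | _) _.
have l0 : (0 : algC) < l%:R by rewrite ltr0n (leq_ltn_trans _ RL).
have S1ge0 : 0 <= S1 by rewrite sumr_ge0 // => g _; rewrite exprn_ge0.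
have S2ge0 : 0 <= S2 by rewrite sumr_ge0 // => g _; rewrite exprn_ge0.
have R5 : (R%:R : algC) ^+ 5 = sqrtC (R ^ 10)%:R.
  by rewrite natrX -[10%N]/(5 * 2)%N exprM sqrCK // exprn_ge0 // ler0n.
rewrite mulrAC ler_pdivlMr ?sqrtC_gt0 // R5 -!sqrtCM ?nnegrE ?ler0n //.
rewrite ler_sqrtC ?nnegrE ?mulr_ge0 ?ler0n //.
by rewrite -ler_pdivlMr // mulrAC sector_sum_Top_le.
Qed.
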